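(* There exists a unique $C^*<0$ such that $u(C^* )=0$, and this $C^*$ is the unique maximizer of $v$ over $(-\infty,B^*]$.
   Context: $\Phi$ is the standard normal distribution function. $B^*\approx0.84$ is the unique positive solution of $\sqrt{2\pi}(1-B^2)e^{B^2/2}\Phi(B)=B$. For $C\le B^*$ define $$v(C):=\frac{1}{\Phi(-C)}\left[(1-(B^* )^2)\Phi(C)-C\frac{e^{-C^2/2}}{\sqrt{2\pi}}\right],$$ $$u(C):=1-(B^* )^2-(1-C^2)\Phi(-C)-\frac{C}{\sqrt{2\pi}}e^{-C^2/2}.$$ *)

From Stdlib Require Import Reals.
From Coquelicot Require Import Coquelicot.
Open Scope R_scope.

Definition phi_dens (t : R) : R := exp (- t ^ 2 / 2) / sqrt (2 * PI).

Definition Phi (x : R) : R :=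
  RInt_gen phi_dens (Rbar_locally m_infty) (at_point x).

Definition Bstar_eq (B : R) : Prop :=
  sqrt (2 * PI) * (1 - B ^ 2) * exp (B ^ 2 / 2) * Phi B = B.

(* v and u, parameterized by the value Bs of B^* *)
Definition v (Bs C : R) : R :=
  / Phi (- C) * ((1 - Bs ^ 2) * Phi C - C * exp (- C ^ 2 / 2) / sqrt (2 * PI)).

Definition u (Bs C : R) : R :=
  1 - Bs ^ 2 - (1 - C ^ 2) * Phi (- C) - C / sqrt (2 * PI) * exp (- C ^ 2 / 2).

From Stdlib Require Import Reals Lra Psatz.
From Coquelicot Require Import Coquelicot.
Open Scope R_scope.

(* [Phi] is defined as an improper integral, so everything rests on the Gaussian
   integral: with [G t = int_0^t exp(-s^2/2) ds], Feynman's trick shows that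
   [G t ^ 2 + int_0^1 2 exp(-t^2 (1+x^2)/2) / (1+x^2) dx] has derivative zero, hence
   equals its value [pi/2] at [t = 0]; thus [G] increases to [sqrt(pi/2)] and
   [Phi x = 1/2 + G x / sqrt(2 pi)].

   Then [u' C = 2 C Phi(-C)] and [v' C = phi C u C / Phi(-C)^2]. So [u] decreases on
   [(-oo, 0]] and increases on [[0, oo)]; it is positive at [-2], equals
   [1/2 - Bs^2 < 0] at [0], and vanishes at [Bs] (this is the defining equation of
   [Bs]). Hence [u] has exactly one negative zero [Cs], is positive left of it and
   negative on [(Cs, Bs)], and [v] increases up to [Cs] and decreases after it. *)

(** * The Gaussian integral *)

Definition gauss (s : R) : R := exp (- s ^ 2 / 2).
Definition gauss_int (t : R) : R := RInt gauss 0 t.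
Definition gauss_half_mass : R := sqrt (PI / 2).

Definition feynman_kernel (t x : R) : R :=
  2 * (exp (- (t ^ 2 * (1 + x ^ 2)) / 2) / (1 + x ^ 2)).
Definition feynman_int (t : R) : R := RInt (feynman_kernel t) 0 1.

Lemma one_plus_sqr_pos x : 0 < 1 + x ^ 2.
Proof. nra. Qed.

Lemma gauss_pos s : 0 < gauss s.
Proof. apply exp_pos. Qed.

Lemma gauss_even s : gauss (- s) = gauss s.
Proof. unfold gauss; f_equal; unfold Rdiv; ring. Qed.

Lemma gauss_continuous s : continuous gauss s.
Proof. apply (ex_derive_continuous (V := R_NormedModule)); unfold gauss; auto_derive; easy. Qed.

Lemma ex_RInt_gauss a b : ex_RInt gauss a b.
Proof. apply (ex_RInt_continuous (V := R_CompleteNormedModule)); intros; apply gauss_continuous. Qed.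

Lemma is_derive_gauss_int t : is_derive gauss_int t (gauss t).
Proof.
  apply is_derive_RInt with (a := 0).
  - apply filter_forall; intros b.
    apply (RInt_correct (V := R_CompleteNormedModule)), ex_RInt_gauss.
  - apply gauss_continuous.
Qed.

Lemma derive_zero_const (f : R -> R) :
  (forall x, is_derive f x 0) -> forall a b, f a = f b.
Proof.
  intros Hf.
  assert (Hlt : forall a b, a < b -> f a = f b).
  { intros a b Hab.
    destruct (MVT_cor2 f (fun _ => 0) a b Hab) as [c [Hc _]].
    - intros c _; apply is_derive_Reals, Hf.
    - lra. }
  intros a b; destruct (Rtotal_order a b) as [h|[h|h]].
  - now apply Hlt.
  - now subst.
  - symmetry; now apply Hlt.
Qed.

Lemma feynman_kernel_pos t x : 0 < feynman_kernel t x.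
Proof.
  unfold feynman_kernel.
  pose proof (one_plus_sqr_pos x); pose proof (exp_pos (- (t ^ 2 * (1 + x ^ 2)) / 2)).
  apply Rmult_lt_0_compat; [lra | apply Rdiv_lt_0_compat; lra].
Qed.

Lemma feynman_kernel_continuous t x : continuous (feynman_kernel t) x.
Proof.
  apply (ex_derive_continuous (V := R_NormedModule)); unfold feynman_kernel; auto_derive.
  pose proof (one_plus_sqr_pos x); lra.
Qed.

Lemma ex_RInt_feynman_kernel t a b : ex_RInt (feynman_kernel t) a b.
Proof.
  apply (ex_RInt_continuous (V := R_CompleteNormedModule)).
  intros; apply feynman_kernel_continuous.
Qed.

Lemma is_derive_feynman_kernel t x :
  is_derive (fun s => feynman_kernel s x) t (- 2 * t * exp (- (t ^ 2 * (1 + x ^ 2)) / 2)).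
Proof.
  pose proof (one_plus_sqr_pos x).
  unfold feynman_kernel; auto_derive; [lra |].
  replace (t * (t * 1) * (1 + x * (x * 1))) with (t ^ 2 * (1 + x ^ 2)) by ring.
  change RinvImpl.Rinv with Rinv; unfold Rdiv; field; lra.
Qed.

Lemma continuity_2d_pt_exp f x y :
  continuity_2d_pt f x y -> continuity_2d_pt (fun s t => exp (f s t)) x y.
Proof.
  intros Hf; apply continuity_2d_pt_filterlim; apply continuity_2d_pt_filterlim in Hf.
  eapply filterlim_comp; [exact Hf |].
  apply (ex_derive_continuous (V := R_NormedModule)); auto_derive; easy.
Qed.

Lemma continuity_2d_pt_feynman_kernel_derive t x :
  continuity_2d_pt (fun s y => - 2 * s * exp (- (s ^ 2 * (1 + y ^ 2)) / 2)) t x.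
Proof.
  apply continuity_2d_pt_mult.
  { apply continuity_2d_pt_mult; [apply continuity_2d_pt_const | apply continuity_2d_pt_id1]. }
  apply continuity_2d_pt_exp.
  apply continuity_2d_pt_ext with (f := fun s y => - ((s * s) * (1 + y * y)) * / 2).
  { intros; unfold Rdiv; ring. }
  apply continuity_2d_pt_mult; [| apply continuity_2d_pt_const].
  apply continuity_2d_pt_opp, continuity_2d_pt_mult.
  - apply continuity_2d_pt_mult; apply continuity_2d_pt_id1.
  - apply continuity_2d_pt_plus; [apply continuity_2d_pt_const |].
    apply continuity_2d_pt_mult; apply continuity_2d_pt_id2.
Qed.

Lemma RInt_gauss_scaled t : RInt (fun s => t * gauss (t * s)) 0 1 = gauss_int t.
Proof.
  unfold gauss_int.
  pose proof (RInt_comp_lin gauss t 0 0 1 (ex_RInt_gauss _ _)) as E.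
  rewrite Rmult_0_r, Rmult_1_r, !Rplus_0_r in E.
  rewrite <- E; apply RInt_ext; intros; now rewrite Rplus_0_r.
Qed.

(* Differentiating under the integral sign and substituting [y = t x]. *)
Lemma is_derive_feynman_int t :
  is_derive feynman_int t (- 2 * gauss t * gauss_int t).
Proof.
  assert (Ddef : forall s x, Derive (fun r => feynman_kernel r x) s
                       = - 2 * s * exp (- (s ^ 2 * (1 + x ^ 2)) / 2)).
  { intros; apply is_derive_unique, is_derive_feynman_kernel. }
  assert (Hval : RInt (fun x => Derive (fun r => feynman_kernel r x) t) 0 1
                 = - 2 * gauss t * gauss_int t).
  { assert (Hpt : forall x, Derive (fun r => feynman_kernel r x) t
                            = - 2 * gauss t * (t * gauss (t * x))).
    { intros x; rewrite Ddef; unfold gauss.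
      replace (- (t ^ 2 * (1 + x ^ 2)) / 2) with (- t ^ 2 / 2 + - (t * x) ^ 2 / 2)
        by (unfold Rdiv; ring).
      rewrite exp_plus; ring. }
    rewrite (RInt_ext _ (fun x => (- 2 * gauss t) * (t * gauss (t * x))))
      by (intros; apply Hpt).
    transitivity (scal (- 2 * gauss t) (RInt (fun x => t * gauss (t * x)) 0 1)).
    - rewrite <- RInt_scal; [reflexivity |].
      apply (ex_RInt_continuous (V := R_CompleteNormedModule)); intros.
      apply (ex_derive_continuous (V := R_NormedModule)); unfold gauss; auto_derive; easy.
    - rewrite RInt_gauss_scaled; reflexivity. }
  rewrite <- Hval; apply is_derive_RInt_param.
  - apply filter_forall; intros s x _; eexists; apply is_derive_feynman_kernel.
  - intros x _.
    apply continuity_2d_pt_ext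
      with (f := fun s y => - 2 * s * exp (- (s ^ 2 * (1 + y ^ 2)) / 2)).
    + intros; now rewrite Ddef.
    + apply continuity_2d_pt_feynman_kernel_derive.
  - apply filter_forall; intros; apply ex_RInt_feynman_kernel.
Qed.

Lemma gauss_int_0 : gauss_int 0 = 0.
Proof. apply (RInt_point (V := R_CompleteNormedModule)). Qed.

Lemma feynman_int_0 : feynman_int 0 = PI / 2.
Proof.
  assert (E : is_RInt (feynman_kernel 0) 0 1 (minus (2 * atan 1) (2 * atan 0))).
  { apply (is_RInt_derive (fun x => 2 * atan x)).
    - intros x _.
      replace (feynman_kernel 0 x) with (2 * / (1 + x ^ 2)).
      + apply is_derive_scal, is_derive_Reals, derivable_pt_lim_atan.
      + unfold feynman_kernel.
        replace (- (0 ^ 2 * (1 + x ^ 2)) / 2) with 0 by (unfold Rdiv; ring).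
        rewrite exp_0; unfold Rdiv; ring.
    - intros; apply feynman_kernel_continuous. }
  unfold feynman_int; rewrite (is_RInt_unique _ _ _ _ E).
  unfold minus, plus, opp; simpl; rewrite atan_1, atan_0; field.
Qed.

Lemma gauss_int_sqr_add_feynman_int t : gauss_int t ^ 2 + feynman_int t = PI / 2.
Proof.
  replace (PI / 2) with (gauss_int 0 ^ 2 + feynman_int 0)
    by (rewrite gauss_int_0, feynman_int_0; ring).
  apply (derive_zero_const (fun t => gauss_int t ^ 2 + feynman_int t)); intros x.
  evar (l : R); replace 0 with l.
  - apply (is_derive_plus (fun t => gauss_int t ^ 2) feynman_int).
    + apply (is_derive_pow gauss_int 2), is_derive_gauss_int.
    + apply is_derive_feynman_int.
  - unfold l; simpl; unfold plus; simpl; ring.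
Qed.

Lemma feynman_int_pos t : 0 < feynman_int t.
Proof.
  apply RInt_gt_0; [lra | intros; apply feynman_kernel_pos | intros; apply feynman_kernel_continuous].
Qed.

Lemma feynman_int_le t : feynman_int t <= 2 * gauss t.
Proof.
  apply Rle_trans with (RInt (fun _ => 2 * gauss t) 0 1).
  2: { rewrite RInt_const; unfold scal; simpl; unfold mult; simpl; lra. }
  apply RInt_le; [lra | apply ex_RInt_feynman_kernel | apply ex_RInt_const |].
  intros x _; unfold feynman_kernel, gauss.
  pose proof (one_plus_sqr_pos x).
  set (e := exp (- (t ^ 2 * (1 + x ^ 2)) / 2)).
  assert (He : e <= exp (- t ^ 2 / 2)).
  { assert (0 <= t ^ 2 * x ^ 2) by (apply Rmult_le_pos; apply pow2_ge_0).
    assert (Hle : - (t ^ 2 * (1 + x ^ 2)) / 2 <= - t ^ 2 / 2) by (unfold Rdiv; nra).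
    destruct (Rle_lt_or_eq_dec _ _ Hle) as [h | h].
    - left; now apply exp_increasing.
    - right; unfold e; now rewrite h. }
  assert (e / (1 + x ^ 2) <= e).
  { assert (0 < e) by apply exp_pos.
    apply Rmult_le_reg_r with (1 + x ^ 2); [lra |].
    unfold Rdiv; rewrite Rmult_assoc, Rinv_l, Rmult_1_r by lra.
    pose proof (pow2_ge_0 x); nra. }
  lra.
Qed.

Lemma gauss_half_mass_sqr : gauss_half_mass * gauss_half_mass = PI / 2.
Proof. apply sqrt_sqrt; pose proof PI2_RGT_0; lra. Qed.

Lemma one_lt_gauss_half_mass : 1 < gauss_half_mass.
Proof.
  pose proof gauss_half_mass_sqr; pose proof PI2_1.
  assert (0 <= gauss_half_mass) by apply sqrt_pos; nra.
Qed.

Lemma sqrt_2PI_eq : sqrt (2 * PI) = 2 * gauss_half_mass.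
Proof.
  unfold gauss_half_mass; replace (2 * PI) with ((2 * 2) * (PI / 2)) by field.
  pose proof PI2_RGT_0; rewrite sqrt_mult, sqrt_square; lra.
Qed.

Lemma sqrt_2PI_pos : 0 < sqrt (2 * PI).
Proof. apply sqrt_lt_R0, Rgt_2PI_0. Qed.

Lemma gauss_int_sqr_lt t : gauss_int t ^ 2 < gauss_half_mass * gauss_half_mass.
Proof.
  rewrite gauss_half_mass_sqr, <- (gauss_int_sqr_add_feynman_int t).
  pose proof (feynman_int_pos t); lra.
Qed.

Lemma gauss_int_bounds t : - gauss_half_mass < gauss_int t < gauss_half_mass.
Proof. pose proof (gauss_int_sqr_lt t); pose proof one_lt_gauss_half_mass; split; nra. Qed.

Lemma gauss_int_nonneg t : 0 <= t -> 0 <= gauss_int t.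
Proof.
  intros Ht; apply RInt_ge_0; [lra | apply ex_RInt_gauss |].
  intros; apply Rlt_le, gauss_pos.
Qed.

Lemma gauss_int_opp t : gauss_int (- t) = - gauss_int t.
Proof.
  unfold gauss_int.
  pose proof (RInt_comp_lin gauss (-1) 0 0 t (ex_RInt_gauss _ _)) as E.
  replace (-1 * 0 + 0) with 0 in E by ring; replace (-1 * t + 0) with (- t) in E by ring.
  rewrite <- E, RInt_scal.
  - rewrite (RInt_ext _ gauss).
    + unfold scal; simpl; unfold mult; simpl; ring.
    + intros x _; replace (-1 * x + 0) with (- x) by ring; apply gauss_even.
  - apply (ex_RInt_continuous (V := R_CompleteNormedModule)); intros.
    apply (ex_derive_continuous (V := R_NormedModule)); unfold gauss; auto_derive; easy.
Qed.

(* [(m - gauss_int t) (m + gauss_int t) = feynman_int t <= 2 gauss t], where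
   [m = gauss_half_mass] and [m + gauss_int t >= m]. *)
Lemma gauss_int_gap t :
  0 <= t -> gauss_half_mass - gauss_int t <= 2 * gauss t / gauss_half_mass.
Proof.
  intros Ht.
  pose proof (gauss_int_sqr_add_feynman_int t) as F; rewrite <- gauss_half_mass_sqr in F.
  pose proof (feynman_int_le t); pose proof (gauss_int_nonneg t Ht).
  pose proof (gauss_int_bounds t); pose proof one_lt_gauss_half_mass.
  apply Rmult_le_reg_r with gauss_half_mass; [lra |].
  unfold Rdiv; rewrite Rmult_assoc, Rinv_l, Rmult_1_r by lra.
  simpl in F; nra.
Qed.

Lemma mul_gauss_le_1 t : 0 <= t -> t * gauss t <= 1.
Proof.
  intros Ht.
  assert (Hinv : gauss t * exp (t ^ 2 / 2) = 1).
  { unfold gauss; rewrite <- exp_plus; replace (- t ^ 2 / 2 + t ^ 2 / 2) with 0 by field.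
    apply exp_0. }
  pose proof (exp_ineq1_le (t ^ 2 / 2)); pose proof (gauss_pos t).
  assert (t <= exp (t ^ 2 / 2)) by nra.
  nra.
Qed.

Lemma gauss_int_tail eps :
  0 < eps -> exists M, forall t, M < t -> gauss_half_mass - gauss_int t < eps.
Proof.
  intros Heps; exists (2 / eps); intros t Ht.
  assert (0 < 2 / eps) by (apply Rdiv_lt_0_compat; lra).
  pose proof (gauss_int_gap t ltac:(lra)); pose proof (mul_gauss_le_1 t ltac:(lra)).
  pose proof one_lt_gauss_half_mass; pose proof (gauss_pos t).
  assert (2 * gauss t / gauss_half_mass < 2 * gauss t).
  { apply Rmult_lt_reg_r with gauss_half_mass; [lra |].
    unfold Rdiv; rewrite Rmult_assoc, Rinv_l, Rmult_1_r by lra; nra. }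
  assert (2 < eps * t).
  { replace 2 with (eps * (2 / eps)) at 1 by (field; lra).
    apply Rmult_lt_compat_l; lra. }
  nra.
Qed.

(** * The normal distribution function *)

Lemma phi_dens_pos t : 0 < phi_dens t.
Proof. apply Rdiv_lt_0_compat; [apply exp_pos | apply sqrt_2PI_pos]. Qed.

Lemma ex_RInt_phi_dens a b : ex_RInt phi_dens a b.
Proof.
  apply (ex_RInt_continuous (V := R_CompleteNormedModule)); intros.
  apply (ex_derive_continuous (V := R_NormedModule)); unfold phi_dens; auto_derive.
  pose proof sqrt_2PI_pos; lra.
Qed.

Lemma RInt_phi_dens a : RInt phi_dens 0 a = gauss_int a / sqrt (2 * PI).
Proof.
  unfold gauss_int; transitivity (scal (/ sqrt (2 * PI)) (RInt gauss 0 a)).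
  - rewrite <- (RInt_scal (V := R_CompleteNormedModule)) by apply ex_RInt_gauss.
    apply RInt_ext; intros x _; unfold scal; simpl; unfold mult; simpl.
    unfold phi_dens; apply Rmult_comm.
  - unfold scal; simpl; unfold mult; simpl; apply Rmult_comm.
Qed.

Lemma is_RInt_gen_phi_dens_left :
  is_RInt_gen phi_dens (Rbar_locally m_infty) (at_point 0) (1 / 2).
Proof.
  intros P [eps HP].
  destruct (gauss_int_tail eps (cond_pos eps)) as [M HM].
  apply Filter_prod with (fun a => a < - M) (fun b => b = 0).
  - exists (- M); auto.
  - reflexivity.
  - intros a b Ha ->; exists (RInt phi_dens a 0); split.
    + apply (RInt_correct (V := R_CompleteNormedModule)), ex_RInt_phi_dens.
    + apply HP.
      rewrite <- (opp_RInt_swap (V := R_CompleteNormedModule)) by apply ex_RInt_phi_dens.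
      rewrite RInt_phi_dens, sqrt_2PI_eq.
      unfold ball; simpl; unfold AbsRing_ball, abs, minus, plus, opp; simpl.
      pose proof (HM (- a) ltac:(lra)); pose proof (gauss_int_bounds a).
      pose proof one_lt_gauss_half_mass; pose proof (cond_pos eps).
      rewrite gauss_int_opp in *.
      set (m := gauss_half_mass) in *.
      replace (- (gauss_int a / (2 * m)) + - (1 / 2)) with (- ((m + gauss_int a) / (2 * m)))
        by (field; lra).
      rewrite Rabs_Ropp, Rabs_pos_eq by (apply Rdiv_le_0_compat; lra).
      apply Rmult_lt_reg_r with (2 * m); [lra |].
      unfold Rdiv; rewrite Rmult_assoc, Rinv_l, Rmult_1_r by lra; nra.
Qed.

Lemma Phi_eq x : Phi x = 1 / 2 + gauss_int x / sqrt (2 * PI).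
Proof.
  apply is_RInt_gen_unique; rewrite <- RInt_phi_dens.
  apply (is_RInt_gen_Chasles (V := R_NormedModule)) with (b := 0).
  - apply is_RInt_gen_phi_dens_left.
  - apply is_RInt_gen_at_point, (RInt_correct (V := R_CompleteNormedModule)), ex_RInt_phi_dens.
Qed.

Lemma is_derive_Phi x : is_derive Phi x (phi_dens x).
Proof.
  apply is_derive_ext with (fun x => 1 / 2 + gauss_int x / sqrt (2 * PI)).
  - intros; now rewrite Phi_eq.
  - unfold phi_dens; fold (gauss x); auto_derive.
    + eexists; apply is_derive_gauss_int.
    + replace (Derive (fun y => gauss_int y) x) with (gauss x)
        by (symmetry; apply is_derive_unique, is_derive_gauss_int).
      change RinvImpl.Rinv with Rinv; pose proof sqrt_2PI_pos; field; lra.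
Qed.

Lemma Derive_Phi x : Derive Phi x = phi_dens x.
Proof. apply is_derive_unique, is_derive_Phi. Qed.

Lemma Phi_opp x : Phi (- x) = 1 - Phi x.
Proof. rewrite !Phi_eq, gauss_int_opp; pose proof sqrt_2PI_pos; field; lra. Qed.

Lemma Phi_0 : Phi 0 = 1 / 2.
Proof. rewrite Phi_eq, gauss_int_0; unfold Rdiv; ring. Qed.

Lemma Phi_bounds x : 0 < Phi x < 1.
Proof.
  rewrite Phi_eq, sqrt_2PI_eq.
  pose proof (gauss_int_bounds x); pose proof one_lt_gauss_half_mass.
  replace (1 / 2 + gauss_int x / (2 * gauss_half_mass))
    with ((gauss_half_mass + gauss_int x) / (2 * gauss_half_mass)) by (field; lra).
  split.
  - apply Rdiv_lt_0_compat; lra.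
  - apply Rmult_lt_reg_r with (2 * gauss_half_mass); [lra |].
    unfold Rdiv; rewrite Rmult_assoc, Rinv_l by lra; lra.
Qed.

Lemma Phi_ge_half x : 0 <= x -> 1 / 2 <= Phi x.
Proof.
  intros Hx; rewrite Phi_eq; pose proof (gauss_int_nonneg x Hx); pose proof sqrt_2PI_pos.
  assert (0 <= gauss_int x / sqrt (2 * PI)) by (apply Rdiv_le_0_compat; lra); lra.
Qed.

(** * The functions [u] and [v] *)

Lemma strict_incr_of_derive_pos (f f' : R -> R) a b :
  a < b -> (forall x, a <= x <= b -> is_derive f x (f' x)) ->
  (forall x, a < x < b -> 0 < f' x) -> f a < f b.
Proof.
  intros Hab Hd Hpos.
  destruct (MVT_cor2 f f' a b Hab) as [c [Hc Hcab]].
  - intros c Hc; apply is_derive_Reals, Hd; lra.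
  - pose proof (Hpos c Hcab); nra.
Qed.

Lemma strict_decr_of_derive_neg (f f' : R -> R) a b :
  a < b -> (forall x, a <= x <= b -> is_derive f x (f' x)) ->
  (forall x, a < x < b -> f' x < 0) -> f b < f a.
Proof.
  intros Hab Hd Hneg.
  apply Ropp_lt_cancel, (strict_incr_of_derive_pos (fun x => - f x) (fun x => - f' x)).
  - exact Hab.
  - intros; apply (is_derive_opp f), Hd; lra.
  - intros x Hx; pose proof (Hneg x Hx); lra.
Qed.

Lemma strict_argmax_of_derive_sign (f f' : R -> R) c b :
  (forall x, is_derive f x (f' x)) ->
  (forall x, x < c -> 0 < f' x) -> (forall x, c < x < b -> f' x < 0) ->
  forall x, x <= b -> x <> c -> f x < f c.
Proof.
  intros Hd Hpos Hneg x Hxb Hxc.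
  destruct (Rtotal_order x c) as [h | [h | h]]; [| contradiction |].
  - apply (strict_incr_of_derive_pos f f'); auto; intros; apply Hpos; lra.
  - apply (strict_decr_of_derive_neg f f'); auto; intros; apply Hneg; lra.
Qed.

Lemma is_derive_u Bs C : is_derive (u Bs) C (2 * C * Phi (- C)).
Proof.
  unfold u; auto_derive.
  - eexists; apply is_derive_Phi.
  - rewrite Derive_Phi; unfold phi_dens.
    replace ((- C) ^ 2) with (C * (C * 1)) by ring.
    change RinvImpl.Rinv with Rinv; unfold Rdiv; pose proof sqrt_2PI_pos; field; lra.
Qed.

Lemma is_derive_v Bs C : is_derive (v Bs) C (phi_dens C * u Bs C / Phi (- C) ^ 2).
Proof.
  pose proof (Phi_bounds (- C)).
  unfold v; auto_derive.
  - repeat split; [eexists; apply is_derive_Phi | lra | eexists; apply is_derive_Phi].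
  - rewrite !Derive_Phi; unfold u, phi_dens.
    replace ((- C) ^ 2) with (C * (C * 1)) by ring; replace (C ^ 2) with (C * (C * 1)) by ring.
    replace (Phi C) with (1 - Phi (- C)) by (rewrite Phi_opp; ring).
    change RinvImpl.Rinv with Rinv; unfold Rdiv; pose proof sqrt_2PI_pos; field; lra.
Qed.

Lemma u_decreasing Bs x y : x < y -> y <= 0 -> u Bs y < u Bs x.
Proof.
  intros Hxy Hy; apply (strict_decr_of_derive_neg _ (fun C => 2 * C * Phi (- C))); auto.
  - intros; apply is_derive_u.
  - intros z Hz; pose proof (Phi_bounds (- z)); nra.
Qed.

Lemma u_increasing Bs x y : 0 <= x -> x < y -> u Bs x < u Bs y.
Proof.
  intros Hx Hxy; apply (strict_incr_of_derive_pos _ (fun C => 2 * C * Phi (- C))); auto.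
  - intros; apply is_derive_u.
  - intros z Hz; pose proof (Phi_bounds (- z)); nra.
Qed.

Lemma u_continuous Bs : continuity (u Bs).
Proof.
  intros x; apply derivable_continuous_pt.
  eexists; apply is_derive_Reals, is_derive_u.
Qed.

Definition Bstar_fun (x : R) : R := (1 - x ^ 2) * Phi x - x * phi_dens x.

Lemma is_derive_Bstar_fun x : is_derive Bstar_fun x (- 2 * x * Phi x).
Proof.
  unfold Bstar_fun, phi_dens; auto_derive.
  - eexists; apply is_derive_Phi.
  - rewrite Derive_Phi; unfold phi_dens.
    replace (x ^ 2) with (x * (x * 1)) by ring.
    change RinvImpl.Rinv with Rinv; unfold Rdiv; pose proof sqrt_2PI_pos; field; lra.
Qed.

Lemma Bstar_eq_Bstar_fun B : Bstar_eq B -> Bstar_fun B = 0.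
Proof.
  unfold Bstar_eq, Bstar_fun, phi_dens; intros E; pose proof sqrt_2PI_pos.
  assert (Hinv : exp (B ^ 2 / 2) * exp (- B ^ 2 / 2) = 1).
  { rewrite <- exp_plus; replace (B ^ 2 / 2 + - B ^ 2 / 2) with 0 by field; apply exp_0. }
  pose proof (exp_pos (B ^ 2 / 2)).
  apply Rmult_eq_reg_l with (sqrt (2 * PI) * exp (B ^ 2 / 2)); [| nra].
  rewrite Rmult_0_r.
  transitivity (sqrt (2 * PI) * (1 - B ^ 2) * exp (B ^ 2 / 2) * Phi B
                - B * (exp (B ^ 2 / 2) * exp (- B ^ 2 / 2))); [field; lra |].
  rewrite Hinv, E; ring.
Qed.

Lemma u_self Bs : u Bs Bs = Bstar_fun Bs.
Proof. unfold u, Bstar_fun, phi_dens; rewrite Phi_opp; unfold Rdiv; ring. Qed.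

(* With [c = 1/sqrt 2]: [(1 - c^2) Phi c >= 1/4 > exp(-1/4) / (2 sqrt pi) = c phi c]. *)
Lemma Bstar_fun_inv_sqrt2_pos : 0 < Bstar_fun (sqrt (/ 2)).
Proof.
  set (c := sqrt (/ 2)).
  assert (Hc2 : c * c = / 2) by (apply sqrt_sqrt; lra).
  assert (Hc : 0 < c) by (apply sqrt_lt_R0; lra).
  set (s := sqrt (2 * PI)).
  assert (Hs2 : s * s = 2 * PI) by (apply sqrt_sqrt; pose proof Rgt_2PI_0; lra).
  assert (Hs0 : 0 < s) by apply sqrt_2PI_pos.
  assert (Hs : 244 / 100 < s) by (pose proof PI2_3_2; nra).
  assert (He : exp (- c ^ 2 / 2) < 4 / 5).
  { replace (- c ^ 2 / 2) with (- (1 / 4)) by (simpl; rewrite Rmult_1_r, Hc2; field).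
    pose proof (exp_ineq1 (1 / 4) ltac:(lra)); pose proof (exp_pos (1 / 4)).
    rewrite exp_Ropp; apply Rmult_lt_reg_l with (exp (1 / 4)); [lra |].
    rewrite Rinv_r; lra. }
  assert (Hphi : c * phi_dens c < 1 / 4).
  { unfold phi_dens; fold s; pose proof (exp_pos (- c ^ 2 / 2)).
    apply Rmult_lt_reg_r with s; [lra |].
    replace (c * (exp (- c ^ 2 / 2) / s) * s) with (c * exp (- c ^ 2 / 2)) by (field; lra).
    nra. }
  pose proof (Phi_ge_half c (Rlt_le _ _ Hc)).
  unfold Bstar_fun; replace (c ^ 2) with (/ 2) by (simpl; rewrite Rmult_1_r; auto); lra.
Qed.

Lemma Bstar_sqr_bounds B : 0 < B -> Bstar_eq B -> / 2 < B ^ 2 < 1.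
Proof.
  intros HB HBeq; apply Bstar_eq_Bstar_fun in HBeq.
  pose proof (Phi_bounds B); pose proof (phi_dens_pos B).
  split.
  - set (c := sqrt (/ 2)).
    assert (Hc2 : c * c = / 2) by (apply sqrt_sqrt; lra).
    assert (Hc : 0 < c) by (apply sqrt_lt_R0; lra).
    destruct (Rlt_or_le c B) as [h | h]; [simpl; nra | exfalso].
    pose proof Bstar_fun_inv_sqrt2_pos as Hc_pos; fold c in Hc_pos.
    destruct (Rle_lt_or_eq_dec _ _ h) as [hlt | ->]; [| lra].
    assert (Bstar_fun c < Bstar_fun B); [| lra].
    apply (strict_decr_of_derive_neg _ (fun x => - 2 * x * Phi x)); auto.
    + intros; apply is_derive_Bstar_fun.
    + intros z Hz; pose proof (Phi_bounds z); nra.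
  - unfold Bstar_fun in HBeq.
    assert (0 < (1 - B ^ 2) * Phi B) by nra.
    destruct (Rlt_or_le (B ^ 2) 1) as [h | h]; auto.
    assert ((1 - B ^ 2) * Phi B <= 0) by (apply Rmult_le_0_r; lra); lra.
Qed.

Lemma u_0 Bs : u Bs 0 = / 2 - Bs ^ 2.
Proof. unfold u; rewrite Ropp_0, Phi_0; field; apply Rgt_not_eq, sqrt_2PI_pos. Qed.

Lemma u_m2_pos Bs : Bs ^ 2 < 1 -> 0 < u Bs (-2).
Proof.
  intros HBs; unfold u; replace (- -2) with 2 by ring.
  pose proof (Phi_ge_half 2 ltac:(lra)); pose proof (phi_dens_pos (-2)).
  unfold phi_dens in *; unfold Rdiv in *; nra.
Qed.

Lemma u_neg_root_exists Bs : / 2 < Bs ^ 2 < 1 -> exists Cs, Cs < 0 /\ u Bs Cs = 0.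
Proof.
  intros [Hlo Hhi].
  pose proof (u_0 Bs); pose proof (u_m2_pos Bs Hhi).
  destruct (IVT (fun C => - u Bs C) (-2) 0) as [Cs [HCs HuCs]]; try lra.
  - intros x; apply continuity_pt_opp, u_continuous.
  - exists Cs; split.
    + destruct (Rle_lt_or_eq_dec _ _ (proj2 HCs)) as [h | ->]; lra.
    + lra.
Qed.

Lemma u_pos_left_of_root Bs Cs x : Cs <= 0 -> u Bs Cs = 0 -> x < Cs -> 0 < u Bs x.
Proof. intros HCs Hu Hx; rewrite <- Hu; now apply u_decreasing. Qed.

Lemma u_neg_between_roots Bs Cs x :
  Cs < 0 -> u Bs Cs = 0 -> 0 < Bs -> u Bs Bs = 0 -> Cs < x < Bs -> u Bs x < 0.
Proof.
  intros HCs HuCs HBs HuBs [Hlo Hhi].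
  destruct (Rlt_or_le x 0) as [h | h].
  - rewrite <- HuCs; apply u_decreasing; lra.
  - rewrite <- HuBs; now apply u_increasing.
Qed.

Lemma v_derive_pos Bs C : 0 < u Bs C -> 0 < phi_dens C * u Bs C / Phi (- C) ^ 2.
Proof.
  intros Hu; pose proof (phi_dens_pos C); pose proof (Phi_bounds (- C)).
  apply Rdiv_lt_0_compat; nra.
Qed.

Lemma v_derive_neg Bs C : u Bs C < 0 -> phi_dens C * u Bs C / Phi (- C) ^ 2 < 0.
Proof.
  intros Hu; pose proof (phi_dens_pos C); pose proof (Phi_bounds (- C)).
  assert (phi_dens C * u Bs C < 0) by nra.
  assert (0 < / Phi (- C) ^ 2) by (apply Rinv_0_lt_compat; nra).
  unfold Rdiv; nra.
Qed.

Theorem lemma3p1 (Bs : R)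
  (HBpos : 0 < Bs) (HBeq : Bstar_eq Bs)
  (HBuniq : forall B, 0 < B -> Bstar_eq B -> B = Bs) :
  exists Cs : R,
    (Cs < 0 /\ u Bs Cs = 0 /\ (forall C, C < 0 -> u Bs C = 0 -> C = Cs)) /\
    (Cs <= Bs /\ forall C, C <= Bs -> C <> Cs -> v Bs C < v Bs Cs).
Proof.
  assert (HuB : u Bs Bs = 0) by (rewrite u_self; now apply Bstar_eq_Bstar_fun).
  destruct (u_neg_root_exists Bs (Bstar_sqr_bounds Bs HBpos HBeq)) as [Cs [HCs HuCs]].
  assert (Hleft : forall x, x < Cs -> 0 < u Bs x)
    by (intros x Hx; apply (u_pos_left_of_root Bs Cs x); auto; lra).
  assert (Hright : forall x, Cs < x < Bs -> u Bs x < 0)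
    by (intros x Hx; now apply (u_neg_between_roots Bs Cs x)).
  exists Cs; repeat split; try lra.
  - intros C HC HuC; destruct (Rtotal_order C Cs) as [h | [h | h]]; auto.
    + pose proof (Hleft C h); lra.
    + pose proof (Hright C ltac:(lra)); lra.
  - apply (strict_argmax_of_derive_sign (v Bs) (fun C => phi_dens C * u Bs C / Phi (- C) ^ 2)).
    + apply is_derive_v.
    + intros; now apply v_derive_pos, Hleft.
    + intros; now apply v_derive_neg, Hright.
Qed.
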